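(* Let $G$ be a finite simple (unweighted) graph with $n\ge1$ vertices. Then for every $k\ge1$, \[[x^k]\tau_G=(-1)^{n+k}\sum_{m=1}^{k}\binom{n-m}{k-m}[x^m]\chi_G,\] where $\chi_G$ is the chromatic polynomial of $G$.
   Context: $X_G=\sum_\kappa\prod_{v}x_{\kappa(v)}$ over proper colourings $\kappa:V(G)\to\{1,2,\dots\}$. $P_\lambda$ is the disjoint union of paths $P_{\lambda_1},\dots,P_{\lambda_{\ell(\lambda)}}$ ($P_n$ the path on $n$ vertices), and $\{X_{P_\lambda}\}$ is a basis of the algebra of symmetric functions over $\mathbb{Q}$. The tree polynomial is $\tau_G(x)=\sum_\lambda a_\lambda x^{\ell(\lambda)}$ where $X_G=\sum_\lambda a_\lambda X_{P_\lambda}$. $[x^k]q$ denotes the coefficient of $x^k$ in a polynomial $q$. *)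

From mathcomp Require Import all_boot all_order all_algebra.
Set Implicit Arguments. Unset Strict Implicit. Unset Printing Implicit Defensive.
Import GRing.Theory Num.Theory.
Local Open Scope ring_scope.

Definition proper (T C : finType) (e : rel T) (k : {ffun T -> C}) : bool :=
  [forall x, forall y, e x y ==> (k x != k y)].

(* Coefficient of the monomial x_0^(s_0) ... x_(N-1)^(s_(N-1)) (N = size s,
   all other variables to the power 0) in the chromatic symmetric function
   X_(T,e) = sum over proper colourings k : T -> {0,1,2,...} of prod_v x_(k v).
   Every monomial in infinitely many variables is of this form, so these
   numbers determine X_(T,e) as a formal power series. *)
Definition cX (T : finType) (e : rel T) (s : seq nat) : nat :=
  #|[set k : {ffun T -> 'I_(size s)} | proper e k &
        [forall i : 'I_(size s), #|[set x | k x == i]| == nth 0%N s i]]|.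

(* the disjoint union of paths P_(lam_1), ..., P_(lam_l) *)
Definition pathV (lam : seq nat) : finType :=
  {i : 'I_(size lam) & 'I_(nth 0%N lam i)}.
Definition pathE (lam : seq nat) : rel (pathV lam) :=
  fun u v => (tag u == tag v) &&
    (((tagged u : nat).+1 == tagged v) || ((tagged v : nat).+1 == tagged u)).

Definition is_part (n : nat) (s : seq nat) : bool :=
  [&& sorted geq s, all (fun x => 0 < x)%N s & sumn s == n].

(* sum of F lam over all partitions lam of n (each exactly once:
   length l <= n, parts <= n) *)
Definition psum (n : nat) (F : seq nat -> rat) : rat :=
  \sum_(l < n.+1) \sum_(t : l.-tuple 'I_n.+1 | is_part n (map val t))
     F (map val t).

(* tree polynomial, given the expansion coefficients a_lam *)
Definition tau_poly (n : nat) (a : seq nat -> rat) : {poly rat} :=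
  \sum_(l < n.+1) \sum_(t : l.-tuple 'I_n.+1 | is_part n (map val t))
     a (map val t) *: 'X^(size (map val t)).

Definition ncol (T : finType) (e : rel T) (q : nat) : nat :=
  #|[set k : {ffun T -> 'I_q} | proper e k]|.

From Pilot Require Import Defs.
From mathcomp Require Import all_boot all_order all_algebra.
From mathcomp Require Import ring zify.
Set Implicit Arguments. Unset Strict Implicit. Unset Printing Implicit Defensive.
Import GRing.Theory Num.Theory.
Local Open Scope ring_scope.

(* Sorting the proper q-colourings by the number of vertices of each colour
   turns X_G = sum a_lam X_(P_lam) into chi_G(q) = sum a_lam chi_(P_lam)(q),
   and a forest with l components on n vertices has q^l (q-1)^(n-l) proper
   q-colourings (colour the roots freely, then each other vertex avoiding its
   parent's colour). Hence chi_G(x) = (x-1)^n tau_G(x/(x-1)). The substitution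
   p(x) |-> (x-1)^n p(x/(x-1)) is an involution on polynomials of degree at
   most n, so tau_G(x) = (x-1)^n chi_G(x/(x-1)) = sum_m [x^m]chi_G x^m
   (x-1)^(n-m), and the formula follows by expanding (x-1)^(n-m). *)

Section ForestColourings.

Variables (T : finType) (e : rel T) (parent : T -> option T) (depth : T -> nat).
Hypothesis depth_parent : forall u v, parent v = Some u -> (depth u < depth v)%N.
Hypothesis e_parent :
  forall x y, e x y = (parent y == Some x) || (parent x == Some y).
Variable p : nat.

Definition parent_diff (k : {ffun T -> 'I_p.+1}) : {ffun T -> 'I_p.+1} :=
  [ffun v => k v - (if parent v is Some u then k u else 0)].

Lemma parent_diff_inj : injective parent_diff.
Proof.
move=> k1 k2 eq_diff; apply/ffunP => v.
suff: forall m v, (depth v < m)%N -> k1 v = k2 v by apply; apply: ltnSn.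
elim=> [|m IHm] {}v //= lt_vm.
have := congr1 (fun f : {ffun T -> 'I_p.+1} => f v) eq_diff; rewrite !ffunE.
case pv: (parent v) => [u|]; last by rewrite !subr0.
rewrite (IHm u); first by move/addIr.
exact: leq_trans (depth_parent pv) lt_vm.
Qed.

Definition diff_range (v : T) : pred 'I_p.+1 :=
  if parent v is Some _ then (fun c => c != 0) else predT.

Lemma proper_parent_diff k :
  Defs.proper e k = (parent_diff k \in family diff_range).
Proof.
apply/forallP/familyP => [k_proper v | k_diff x].
  rewrite /diff_range ffunE; case pv: (parent v) => [u|] //.
  have := forallP (k_proper u) v; rewrite e_parent pv eqxx /=.
  by rewrite unfold_in /=; apply: contra => /eqP/subr0_eq->.
apply/forallP => y; apply/implyP; rewrite e_parent.
have diff_neq u w : parent w = Some u -> k u != k w.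
  move=> pw; have := k_diff w; rewrite /diff_range ffunE pw unfold_in /=.
  by apply: contra => /eqP->; rewrite subrr.
by case/orP=> /eqP/diff_neq; rewrite // eq_sym.
Qed.

Lemma ncol_forest :
  ncol e p.+1 =
    (p.+1 ^ #|[pred v | parent v == None]| * p ^ #|[pred v | parent v != None]|)%N.
Proof.
have -> : ncol e p.+1 = #|parent_diff @^-1: [set g | g \in family diff_range]|.
  by apply: eq_card => k; rewrite !inE proper_parent_diff.
rewrite card_preimset; last exact: parent_diff_inj.
rewrite cardsE card_family foldrE big_map big_enum /=.
rewrite (bigID (fun v => parent v == None)) /=.
rewrite (eq_bigr (fun _ => p.+1)) => [|v /eqP pv]; last first.
  by rewrite /diff_range pv card_ord.
rewrite [X in (_ * X)%N](eq_bigr (fun _ => p)) => [|v]; last first.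
  rewrite /diff_range; case: (parent v) => // _ _.
  transitivity #|predC1 (0 : 'I_p.+1)|; last by rewrite cardC1 card_ord.
  by apply: eq_card => c; rewrite !inE.
by rewrite !prod_nat_const.
Qed.

End ForestColourings.

Definition path_parent (lam : seq nat) (v : pathV lam) : option (pathV lam) :=
  if (tagged v : nat) == 0%N then None
  else Some (Tagged (fun i : 'I_(size lam) => 'I_(nth 0%N lam i))
     (Ordinal (leq_ltn_trans (leq_pred (tagged v)) (ltn_ord (tagged v))))).

Arguments path_parent {lam}.

Lemma path_parentE lam (u v : pathV lam) :
  (path_parent v == Some u) = (tag u == tag v) && ((tagged u : nat).+1 == tagged v).
Proof.
case: v u => [i j] [i' j'] /=; rewrite /path_parent /=.
have [->|j_gt0] /= := eqVneq (j : nat) 0%N; first by rewrite andbF.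
rewrite (inj_eq Some_inj); have [eq_i|neq_i] /= := eqVneq i' i; last first.
  by apply/negbTE; apply: contra neq_i => /eqP/(congr1 tag) /= ->.
subst i'; rewrite eq_sym eq_Tagged /=.
apply/eqP/eqP => [-> /= | /= eq_j]; first by rewrite prednK // lt0n.
by apply: val_inj; rewrite /= -eq_j.
Qed.

Lemma pathE_parent lam (u v : pathV lam) :
  pathE u v = (path_parent v == Some u) || (path_parent u == Some v).
Proof.
by rewrite !path_parentE /pathE [tag v == tag u]eq_sym; case: (tag u == tag v).
Qed.

Lemma path_parent_lt lam (u v : pathV lam) :
  path_parent v = Some u -> (tagged u < tagged v)%N.
Proof. by move/eqP; rewrite path_parentE => /andP[_ /eqP <-]. Qed.

Lemma card_pathV lam : #|pathV lam| = sumn lam.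
Proof.
rewrite card_tagged (eq_map (fun i : 'I_(size lam) => card_ord (nth 0%N lam i))).
by rewrite (map_comp (nth 0%N lam) val) val_enum_ord -/(mkseq _ _) mkseq_nth.
Qed.

Lemma card_path_roots lam : all (fun x => 0 < x)%N lam ->
  #|[pred v : pathV lam | path_parent v == None]| = size lam.
Proof.
move=> /all_nthP lam_pos.
have first_lt i : (0 < nth 0%N lam (i : 'I_(size lam)))%N by apply: lam_pos.
pose first_vertex i : pathV lam := Tagged _ (Ordinal (first_lt i)).
have first_inj : injective first_vertex by move=> i j /(congr1 tag).
rewrite -[RHS](card_ord (size lam)) -(card_imset _ first_inj).
apply: eq_card => v; rewrite !inE /path_parent; apply/idP/imsetP => [|[i _ ->]] //.
case: (eqVneq (tagged v : nat) 0%N) => [tv0 _|] //; exists (tag v) => //.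
by apply/eqP; rewrite eq_Tagged; apply/eqP/val_inj.
Qed.

Lemma ncol_path lam p : all (fun x => 0 < x)%N lam ->
  ncol (@pathE lam) p.+1 = (p.+1 ^ size lam * p ^ (sumn lam - size lam))%N.
Proof.
move=> lam_pos.
rewrite (@ncol_forest _ _ _ (fun v : pathV lam => tagged v) (@path_parent_lt lam)
  (@pathE_parent lam)) card_path_roots //; congr (_ * _ ^ _)%N.
rewrite -card_pathV -(cardC [pred v : pathV lam | path_parent v == None]).
by rewrite card_path_roots // addKn; apply: eq_card => v; rewrite !inE.
Qed.

Lemma cX_size (T : finType) (e : rel T) (s : seq nat) (q : nat) : size s = q ->
  cX e s = #|[set k : {ffun T -> 'I_q} | Defs.proper e k &
        [forall i : 'I_q, #|[set x | k x == i]| == nth 0%N s i]]|.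
Proof. by move=> <-. Qed.

(* The colouring [k] is counted in the summand indexed by its colour-class
   sizes; [#|T| <= N] makes these sizes fit in ['I_N.+1]. *)
Lemma ncol_sum_cX (T : finType) (e : rel T) (N q : nat) : (#|T| <= N)%N ->
  ncol e q = (\sum_(t : q.-tuple 'I_N.+1) cX e (map val t))%N.
Proof.
move=> le_TN.
have nth_t (t : q.-tuple 'I_N.+1) (i : 'I_q) : nth 0%N (map val t) i = tnth t i.
  by rewrite (nth_map ord0) ?size_tuple // -tnth_nth.
have class_lt (k : {ffun T -> 'I_q}) i : (#|[set x | k x == i]| < N.+1)%N.
  by rewrite ltnS; apply: leq_trans (max_card _) le_TN.
pose sizes (k : {ffun T -> 'I_q}) : q.-tuple 'I_N.+1 :=
  [tuple inord #|[set x | k x == i]| | i < q].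
rewrite /ncol -sum1_card (partition_big sizes predT) //=; apply: eq_bigr => t _.
rewrite (@cX_size _ _ _ q) ?size_map ?size_tuple // -sum1_card.
apply: eq_bigl => k; rewrite !inE; congr (_ && _).
apply/eqP/forallP => [<- i | sizes_t].
  by rewrite nth_t tnth_mktuple /= inordK.
apply: eq_from_tnth => i; apply: val_inj.
by rewrite tnth_mktuple /= inordK // -nth_t; apply/eqP.
Qed.

Section XdivSubst.

Variable R : numFieldType.
Implicit Types p : {poly R}.

Lemma poly_eq_at_nat p1 p2 :
  (forall q : nat, p1.[q.+2%:R] = p2.[q.+2%:R]) -> p1 = p2.
Proof.
move=> eq_p12; apply/eqP; rewrite -subr_eq0; apply/negPn/negP => nz_p12.
pose rs := [seq i.+2%:R | i <- iota 0 (size (p1 - p2))] : seq R.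
have rs_roots : all (root (p1 - p2)) rs.
  by apply/allP => _ /mapP[i _ ->]; rewrite /root !hornerE eq_p12 subrr.
have rs_uniq : uniq rs.
  by rewrite map_inj_uniq ?iota_uniq // => i j /eqP; rewrite eqr_nat => /eqP[].
by have := max_poly_roots nz_p12 rs_roots rs_uniq; rewrite size_map size_iota ltnn.
Qed.

(* [xdiv_subst n p] is (x - 1)^n p(x / (x - 1)) when [p] has degree <= n. *)
Definition xdiv_subst n p : {poly R} :=
  \sum_(m < n.+1) p`_m *: ('X^m * ('X - 1) ^+ (n - m)).

Lemma size_xdiv_subst n p : (size (xdiv_subst n p) <= n.+1)%N.
Proof.
apply: leq_trans (size_sum _ _ _) _; apply/bigmax_leqP => m _.
apply: leq_trans (size_scale_leq _ _) _; apply: leq_trans (size_polyMleq _ _) _.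
by rewrite size_polyXn -polyC1 size_exp_XsubC; have := ltn_ord m; lia.
Qed.

Lemma horner_xdiv_subst n p y : (size p <= n.+1)%N -> y != 1 ->
  (xdiv_subst n p).[y] = (y - 1) ^+ n * p.[y / (y - 1)].
Proof.
move=> size_p y_neq1; have w_neq0 : y - 1 != 0 by rewrite subr_eq0.
rewrite (horner_coef_wide _ size_p) mulr_sumr horner_sum; apply: eq_bigr => m _.
have le_mn : (m <= n)%N by rewrite -ltnS.
have -> : (y - 1) ^+ n = (y - 1) ^+ m * (y - 1) ^+ (n - m) by rewrite -exprD subnKC.
rewrite !hornerE expr_div_n.
have nz_wm : (y - 1) ^+ m != 0 by rewrite expf_neq0.
move: (y ^+ m) ((y - 1) ^+ m) ((y - 1) ^+ (n - m)) (p`_m) nz_wm => A B C D nzB /=.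
by field.
Qed.

Lemma xdiv_substK n p : (size p <= n.+1)%N -> xdiv_subst n (xdiv_subst n p) = p.
Proof.
move=> size_p; apply: poly_eq_at_nat => q; set y : R := q.+2%:R.
have w_neq0 : y - 1 != 0 by rewrite /y mulrSr addrK pnatr_eq0.
have y_neq1 : y != 1 by rewrite -subr_eq0.
have z1_eq : y / (y - 1) - 1 = (y - 1)^-1.
  by rewrite -[X in _ - X](divff w_neq0) -mulrBl opprB addrC subrK mul1r.
have z_neq1 : y / (y - 1) != 1 by rewrite -subr_eq0 z1_eq invr_eq0.
rewrite !horner_xdiv_subst ?size_xdiv_subst // z1_eq invrK divfK //.
by rewrite mulrA -exprMn mulfV // expr1n mul1r.
Qed.

Lemma coef_Xsub1_exp j t :
  (('X - 1 : {poly R}) ^+ j)`_t = (-1) ^+ (j + t) * ('C(j, t))%:R.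
Proof.
elim: j t => [|j IHj] t.
  by rewrite expr0 coef1 bin0n; case: t => [|t]; rewrite ?mulr0 ?mulr1.
rewrite exprSr mulrBr mulr1 coefB coefMX; case: t => [|t] /=.
  by rewrite IHj !bin0 !addn0 exprS; ring.
by rewrite !IHj binS natrD addSn !addnS !exprS; ring.
Qed.

Lemma sum_ord_vanishing n1 n2 (F : nat -> R) : (n1 <= n2)%N ->
  (forall i, (n1 <= i)%N -> F i = 0) -> \sum_(i < n2) F i = \sum_(i < n1) F i.
Proof.
move=> le_n12 F0; rewrite (big_ord_widen _ F le_n12) [RHS]big_mkcond /=.
by apply: eq_bigr => i _; case: ltnP => // /F0.
Qed.

Lemma coef_xdiv_subst n p k : (size p <= n.+1)%N ->
  (xdiv_subst n p)`_k =
    (-1) ^+ (n + k) * \sum_(m < k.+1) ('C(n - m, k - m))%:R * p`_m.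
Proof.
move=> size_p.
pose G m :=
  if (k < m)%N then 0 else (-1) ^+ (n + k) * (('C(n - m, k - m))%:R * p`_m).
have G0 m : (n.+1 <= m)%N || (k.+1 <= m)%N -> G m = 0.
  case/orP=> lt_m; rewrite /G ?lt_m // (nth_default _ (leq_trans size_p lt_m)).
  by rewrite mulr0 mulr0 if_same.
rewrite /xdiv_subst coef_sum mulr_sumr.
transitivity (\sum_(m < n.+1) G m).
  apply: eq_bigr => m _; rewrite coefZ coefXnM /G; case: ltnP => le_mk.
    by rewrite mulr0.
  have le_mn : (m <= n)%N by rewrite -ltnS.
  have sign_eq : (-1) ^+ (n - m + (k - m)) = (-1) ^+ (n + k) :> R.
    have -> : (n + k = n - m + (k - m) + 2 * m)%N by lia.
    by rewrite [RHS]exprD exprM sqrrN expr1n expr1n mulr1.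
  by rewrite coef_Xsub1_exp sign_eq; ring.
have G0n m : (n.+1 <= m)%N -> G m = 0 by move=> le_m; rewrite G0 ?le_m.
have G0k m : (k.+1 <= m)%N -> G m = 0 by move=> le_m; rewrite G0 ?le_m ?orbT.
have [le_n le_k] : (n.+1 <= (n + k).+1)%N /\ (k.+1 <= (n + k).+1)%N by lia.
rewrite -(sum_ord_vanishing le_n G0n) (sum_ord_vanishing le_k G0k).
by apply: eq_bigr => m _; rewrite /G ltnNge -ltnS ltn_ord.
Qed.

End XdivSubst.

Lemma eq_psum n (F G : seq nat -> rat) :
  (forall lam, (size lam <= n)%N -> is_part n lam -> F lam = G lam) ->
  psum n F = psum n G.
Proof.
move=> eqFG; apply: eq_bigr => l _; apply: eq_bigr => t part_t.
by apply: eqFG; rewrite // size_map size_tuple -ltnS.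
Qed.

Lemma mulr_psum n c (F : seq nat -> rat) :
  c * psum n F = psum n (fun lam => c * F lam).
Proof. by rewrite mulr_sumr; apply: eq_bigr => l _; rewrite mulr_sumr. Qed.

Lemma psum_sum (I : finType) n (F : I -> seq nat -> rat) :
  \sum_i psum n (F i) = psum n (fun lam => \sum_i F i lam).
Proof. by rewrite exchange_big; apply: eq_bigr => l _; rewrite exchange_big. Qed.

Lemma horner_tau_poly n a y :
  (tau_poly n a).[y] = psum n (fun lam => a lam * y ^+ size lam).
Proof.
rewrite horner_sum; apply: eq_bigr => l _.
by rewrite horner_sum; apply: eq_bigr => t _; rewrite hornerZ hornerXn.
Qed.

Lemma size_tau_poly n a : (size (tau_poly n a) <= n.+1)%N.
Proof.
apply: leq_trans (size_sum _ _ _) _; apply/bigmax_leqP => l _.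
apply: leq_trans (size_sum _ _ _) _; apply/bigmax_leqP => t _.
by apply: leq_trans (size_scale_leq _ _) _; rewrite size_polyXn size_map size_tuple.
Qed.

Section ChromaticPolynomial.

Variables (V : finType) (e : rel V) (a : seq nat -> rat) (chi : {poly rat}).
Hypothesis Ha : forall s : seq nat,
  (cX e s)%:R = psum #|V| (fun lam => a lam * (cX (@pathE lam) s)%:R).
Hypothesis Hchi : forall q : nat, chi.[q%:R] = (ncol e q)%:R.

Let n := #|V|.

Lemma ncol_psum q : (ncol e q.+1)%:R =
  psum n (fun lam => a lam * (q.+1%:R ^+ size lam * q%:R ^+ (n - size lam))).
Proof.
rewrite (@ncol_sum_cX _ e n) // natr_sum; under eq_bigr do rewrite Ha.
rewrite psum_sum; apply: eq_psum => lam _ /and3P[_ lam_pos /eqP sum_lam].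
rewrite -mulr_sumr -natr_sum -ncol_sum_cX ?card_pathV ?sum_lam //.
by rewrite ncol_path // sum_lam natrM !natrX.
Qed.

Lemma chi_xdiv_subst_tau : chi = xdiv_subst n (tau_poly n a).
Proof.
apply: poly_eq_at_nat => q; have q1E : q.+2%:R - 1 = q.+1%:R :> rat.
  by rewrite mulrSr addrK.
rewrite Hchi ncol_psum horner_xdiv_subst ?size_tau_poly //; last first.
  by rewrite -subr_eq0 q1E pnatr_eq0.
rewrite q1E horner_tau_poly mulr_psum; apply: eq_psum => lam le_lam_n _.
have nz_q1 : q.+1%:R ^+ size lam != 0 :> rat by rewrite expf_neq0 ?pnatr_eq0.
rewrite -{2}(subnKC le_lam_n) exprD expr_div_n.
move: (q.+2%:R ^+ _) (q.+1%:R ^+ size lam) (q.+1%:R ^+ (n - _)) (a lam) nz_q1.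
by move=> A B C D nzB /=; field.
Qed.

Lemma tau_xdiv_subst_chi : tau_poly n a = xdiv_subst n chi.
Proof. by rewrite chi_xdiv_subst_tau xdiv_substK ?size_tau_poly. Qed.

Lemma size_chi : (size chi <= n.+1)%N.
Proof. by rewrite chi_xdiv_subst_tau size_xdiv_subst. Qed.

Lemma chi_coef0 : (0 < n)%N -> chi`_0 = 0.
Proof.
move=> n_gt0; rewrite -horner_coef0 -[0]/(0%:R) Hchi; apply/eqP; rewrite pnatr_eq0.
by rewrite -leqn0 (leq_trans (max_card _)) // card_ffun card_ord exp0n.
Qed.

End ChromaticPolynomial.

Theorem theorem3p2 (V : finType) (e : rel V)
  (e_sym : symmetric e) (e_irr : irreflexive e) (n_pos : (0 < #|V|)%N)
  (a : seq nat -> rat)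
  (Ha : forall s : seq nat,
        (cX e s)%:R = psum #|V| (fun lam => a lam * (cX (@pathE lam) s)%:R))
  (chi : {poly rat})
  (Hchi : forall q : nat, chi.[q%:R] = (ncol e q)%:R)
  (k : nat) (k_pos : (0 < k)%N) :
  (tau_poly #|V| a)`_k =
    (-1) ^+ (#|V| + k) *
    \sum_(1 <= m < k.+1) ('C(#|V| - m, k - m))%:R * chi`_m.
Proof.
rewrite (tau_xdiv_subst_chi Ha Hchi) coef_xdiv_subst ?(size_chi Ha Hchi) //.
rewrite -(big_mkord xpredT (fun m => ('C(#|V| - m, k - m))%:R * chi`_m)).
by rewrite big_ltn // (chi_coef0 Hchi n_pos) mulr0 add0r.
Qed.
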